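(* Let $c,h\in\mathbb{N}$ with $c>2(h+1)$, let $\ell=c2^h+1$, let $n\ge\ell$, and let $\underline{\eta}=(\eta_1<\dots<\eta_s)$ be positive integer thresholds whose largest threshold is $\eta_s=2^{h-1}+2$. Then there exists a $c\times n$ binary matrix $\mathbf{R}$, depending only on $n$, $h$, $c$ (hence only on $n,\ell$ and $\eta_s$, not on the other thresholds), such that for all $i,j\in\{0,\dots,n-\ell\}$ with $0<|i-j|<2\ell$, $\underline{\eta}(\mathbf{R}\mathbf{b}_i)\neq\underline{\eta}(\mathbf{R}\mathbf{b}_j)$. (Note $c\approx\ell/(2\eta_s)$.)
   Context: Items are indexed $0,\dots,n-1$; $\mathbf{b}_i\in\{0,1\}^n$ is the burst of length $\ell$ with head $i$ (coordinates $i,\dots,i+\ell-1$ equal to $1$). The SQGT outcome of a nonnegative integer $y$ is $\underline{\eta}(y)=|\{k:\eta_k\le y\}|$, applied entrywise to vectors. *)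

From mathcomp Require Import all_boot all_order all_algebra.
Set Implicit Arguments. Unset Strict Implicit. Unset Printing Implicit Defensive.

Definition burst (n : nat) (l i : nat) : 'I_n -> nat :=
  fun k => nat_of_bool ((i <= k) && (k < i + l)).
Arguments burst : clear implicits.

Definition mxvec_nat {c n : nat} (R : 'M[bool]_(c, n)) (v : 'I_n -> nat)
  : 'I_c -> nat :=
  fun r => \sum_(k < n) nat_of_bool (R r k) * v k.

Definition sqgt (eta : seq nat) (y : nat) : nat := count (fun e => e <= y) eta.

Definition sqgt_vec {c : nat} (eta : seq nat) (v : 'I_c -> nat) : {ffun 'I_c -> nat} :=
  [ffun r => sqgt eta (v r)].

Definition thresholds (eta : seq nat) (eta_s : nat) : Prop :=
  [/\ eta != [::], all (fun e => 0 < e) eta, sorted ltn eta & last 0 eta = eta_s].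

From mathcomp Require Import all_boot all_order all_algebra.
From mathcomp Require Import zify.
Set Implicit Arguments. Unset Strict Implicit. Unset Printing Implicit Defensive.

(* Write P = 2^h, period = cP, ell = period + 1.
   Row x of the matrix marks the down edges (1 followed by 0) of a boolean
   sequence b_x with b_x(p + ell) = ~~ b_x(p), plus one extra 1 per period where
   b_x is constant.  Sliding a window over such an antiperiodic sequence trades
   down edges for up edges, so [i, i + ell) contains (its count at 0) + b_x(i)
   - b_x(0) down edges (window_down); the construction makes every window
   weight 2^(h-1) + 1 + b_x(i) (row_weight), which the threshold
   eta_s = 2^(h-1) + 2 reads off exactly (sqgt_bit).
   All b_x read one sequence rho of antiperiod cP, shifted by x blocks of
   length P and stretched to antiperiod ell by repeating one sample.  A period
   of rho is a zero block, c-h-1 blocks of ones and h blocks of complemented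
   Gray code bits; Gray bits have 2^(h-1) down edges in total and determine the
   offset in a block, the blocks of ones determine the block, and a spike in
   row h+1 separates the repeated sample, so the column code separates columns
   less than 2 ell apart (row_inj).  The theorem combines row_weight, sqgt_bit
   and row_inj. *)

Lemma sum_indicator a n k0 : a <= k0 < n -> \sum_(a <= k < n) (k == k0 : nat) = 1.
Proof.
move=> hk0; rewrite (eq_bigr (fun k => if k == k0 then 1 else 0)); last by move=> k _; case: eqP.
by rewrite -big_mkcond big_nat1_eq /= hk0.
Qed.

Lemma sum_nat_zero m n (F : nat -> nat) :
  (forall i, m <= i < n -> F i = 0) -> \sum_(m <= i < n) F i = 0.
Proof. by move=> H; rewrite big1_seq // => i /andP [_]; rewrite mem_index_iota => /H. Qed.

Lemma divmodnMDl q r d : r < d -> (q * d + r) %/ d = q /\ (q * d + r) %% d = r.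
Proof. by move=> hr; rewrite divnMDl ?modnMDl ?divn_small ?modn_small ?addn0; lia. Qed.

Lemma close_same_parity q q' u L : odd q = odd q' ->
  q * L + u < q' * L + u + 2 * L -> q' * L + u < q * L + u + 2 * L -> q = q'.
Proof.
wlog hq : q q' / q <= q'.
  by move=> W hodd h1 h2; case: (leqP q q') => hq; [|apply/esym]; apply: W; lia.
move=> hodd _ h2; case: (eqVneq q q') => // hne.
have hq2 : q.+2 <= q'.
  by case: (eqVneq q' q.+1) => [E|_]; [move: hodd; rewrite E /=; case: (odd q) | lia].
have : q.+2 * L <= q' * L by rewrite leq_mul2r hq2 orbT.
by rewrite !mulSn; lia.
Qed.

(* Bit j of the reflected Gray code of k. *)
Definition gray (j k : nat) : bool := odd ((k + 2 ^ j) %/ 2 ^ j.+1).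

Lemma gray_small j k : k < 4 * 2 ^ j -> gray j k = (2 ^ j <= k) && (k < 3 * 2 ^ j).
Proof.
rewrite /gray expnS; set X := 2 ^ j => hk.
have X0 : 0 < X by rewrite expn_gt0.
have lo := leq_divM (k + X) (2 * X); have hi := ltn_ceil (k + X) (ltac:(lia) : 0 < 2 * X).
set q := (k + X) %/ (2 * X) in lo hi *.
have : q < 3.
  rewrite ltnNge; apply/negP => h3.
  have : 3 * (2 * X) <= q * (2 * X) by rewrite leq_mul2r h3 orbT.
  lia.
by case: q lo hi => [|[|[|q]]] lo hi _ //=; lia.
Qed.

Lemma gray_period j k a : gray j (k + a * (4 * 2 ^ j)) = gray j k.
Proof.
rewrite /gray expnS.
have -> : k + a * (4 * 2 ^ j) + 2 ^ j = (2 * a) * (2 * 2 ^ j) + (k + 2 ^ j) by lia.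
by rewrite divnMDl ?muln_gt0 ?expn_gt0 // oddD oddM.
Qed.

Lemma gray0 j : gray j 0 = false.
Proof. by rewrite gray_small ?expn_gt0 //; lia. Qed.

Lemma gray_xor j k : gray j k = odd (k %/ 2 ^ j) (+) odd (k %/ 2 ^ j.+1).
Proof.
have X0 : 0 < 2 ^ j by rewrite expn_gt0.
rewrite /gray !expnSr !divnMA divnDr ?dvdnn // divnn X0 addn1 !divn2.
by rewrite -uphalfE uphalf_half oddD oddb.
Qed.

Lemma gray_half j k : gray j.+1 k = gray j k./2.
Proof. by rewrite !gray_xor -!divn2 -!divnMA -!expnS. Qed.

Lemma gray_inj_div h k k' : (forall j, j < h -> gray j k = gray j k') ->
  k %/ 2 ^ h = k' %/ 2 ^ h -> k = k'.
Proof.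
elim: h k k' => [|h IH] k k' Hg Hq; first by move: Hq; rewrite !divn1.
have Hhalf : k./2 = k'./2.
  apply: IH => [j hj|]; first by rewrite -!gray_half Hg.
  by rewrite -!divn2 -!divnMA -!expnS.
have Hodd : odd k = odd k'.
  by move: (Hg 0 isT); rewrite !gray_xor !expn1 !divn1 !divn2 Hhalf => /addIb.
by rewrite -[k]odd_double_half -[k']odd_double_half Hodd Hhalf.
Qed.

Lemma gray_inj h k k' : k < 2 ^ h -> k' < 2 ^ h ->
  (forall j, j < h -> gray j k = gray j k') -> k = k'.
Proof. by move=> hk hk' Hg; apply: gray_inj_div Hg _; rewrite !divn_small. Qed.

Definition down (b : nat -> bool) (p : nat) : bool := b p && ~~ b p.+1.
Definition up (b : nat -> bool) (p : nat) : bool := ~~ b p && b p.+1.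

Lemma window_periodic (f : nat -> nat) N : (forall p, f (p + N) = f p) ->
  forall i, \sum_(i <= p < i + N) f p = \sum_(0 <= p < N) f p.
Proof.
move=> Hf; case: (posnP N) => [->|N0] i; first by rewrite addn0 !big_geq.
elim: i => [//|i IH]; rewrite -IH (big_ltn (ltac:(lia) : i < i + N)).
by rewrite addSn big_nat_recr /= ?Hf 1?addnC //; lia.
Qed.

(* For an antiperiodic sequence (b (p + N) = ~~ b p) sliding the window by
   one trades the down edge leaving it for the up edge entering it, so the
   number of down edges in [i, i + N) exceeds its value at 0 by b i - b 0. *)
Lemma window_down (b : nat -> bool) N : (forall p, b (p + N) = ~~ b p) ->
  forall i, \sum_(i <= p < i + N) down b p + b 0 = \sum_(0 <= p < N) down b p + b i.
Proof.
move=> Hb; have N0 : 0 < N by case: N Hb => // /(_ 0); rewrite addn0; case: (b 0).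
have step i : \sum_(i.+1 <= p < i.+1 + N) down b p + b i =
              \sum_(i <= p < i + N) down b p + b i.+1.
  rewrite (big_ltn (ltac:(lia) : i < i + N)) addSn big_nat_recr /=; last lia.
  set S := \sum_(_ <= _ < _) _; rewrite /down Hb -addSn Hb negbK.
  by case: (b i); case: (b i.+1) => /=; lia.
elim=> [//|i IH]; have := step i; lia.
Qed.

Lemma down_reparam (b : nat -> bool) (s : nat -> nat) a m :
  (forall p, s p.+1 = s p \/ s p.+1 = (s p).+1) ->
  \sum_(a <= p < a + m) down (fun p => b (s p)) p = \sum_(s a <= t < s (a + m)) down b t.
Proof.
move=> Hs; have mono m' : s a <= s (a + m').
  by elim: m' => [|m' IH]; rewrite ?addn0 // addnS; case: (Hs (a + m')) => ->; lia.
elim: m => [|m IH]; first by rewrite addn0 !big_geq.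
rewrite addnS big_nat_recr ?leq_addr // IH /down.
case: (Hs (a + m)) => ->; first by rewrite andbN /= addn0.
by rewrite big_nat_recr ?mono.
Qed.

Lemma down_flip (b : nat -> bool) p0 a n : a <= p0 < n -> 0 < p0 ->
  b p0.-1 = false -> b p0 = false -> b p0.+1 = false ->
  \sum_(a <= p < n) down (fun p => b p (+) (p == p0)) p = \sum_(a <= p < n) down b p + 1.
Proof.
move=> hp p0pos b1 b2 b3.
have term p : nat_of_bool (down (fun q => b q (+) (q == p0)) p) = down b p + (p == p0).
  rewrite /down; case: (eqVneq p p0) => [->|hne].
    by rewrite b2 b3 (_ : (p0.+1 == p0) = false) //; lia.
  case: (eqVneq p.+1 p0) => [hp0|hne1].
    by move: b1 b2; rewrite -hp0 /= => -> ->.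
  by rewrite !addbF addn0.
by rewrite (eq_big_nat _ _ (fun p _ => term p)) big_split /= sum_indicator.
Qed.

Lemma expn_split h j : j.+2 <= h -> 2 ^ h = 2 ^ (h - j.+2) * (4 * 2 ^ j).
Proof. by move=> hj; rewrite -[in LHS](subnK hj) expnD !expnS; lia. Qed.

Lemma gray_up_small j k : k < 4 * 2 ^ j -> up (gray j) k = (k.+1 == 2 ^ j).
Proof.
move=> hk; have X0 : 0 < 2 ^ j by rewrite expn_gt0.
case: (ltnP k.+1 (4 * 2 ^ j)) => hk1.
  by rewrite /up !gray_small //; apply/idP/idP => [/andP [/negP ? /andP [? ?]]|/eqP ?]; lia.
rewrite /up (_ : k.+1 = 0 + 1 * (4 * 2 ^ j)); last lia.
by rewrite gray_period gray0 andbF; lia.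
Qed.

(* On one period, gray j has a single up edge, just before 2^j. *)
Lemma gray_ups_periods j a : \sum_(0 <= k < a * (4 * 2 ^ j)) up (gray j) k = a.
Proof.
have X0 : 0 < 2 ^ j by rewrite expn_gt0.
have per k : up (gray j) (k + 4 * 2 ^ j) = up (gray j) k.
  by rewrite /up -addSn -[4 * 2 ^ j]mul1n (gray_period j k) (gray_period j k.+1).
elim: a => [|a IH]; first by rewrite big_geq.
rewrite mulSnr (big_cat_nat (leq0n _) (leq_addr _ _)) IH.
rewrite window_periodic => [|k]; last by rewrite per.
rewrite (eq_big_nat _ _ (fun k hk => congr1 nat_of_bool (gray_up_small (proj2 (andP hk))))).
have [X1 ->] : exists X1, 2 ^ j = X1.+1 by exists (2 ^ j).-1; rewrite prednK.
under eq_big_nat do rewrite eqSS.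
by rewrite sum_indicator; [exact: addn1 | lia].
Qed.

Lemma gray_ups_low h j : j.+2 <= h -> \sum_(0 <= k < 2 ^ h) up (gray j) k = 2 ^ (h - j.+2).
Proof. by move=> hj; rewrite (expn_split hj) gray_ups_periods. Qed.

Lemma gray_ups_top h : 0 < h -> \sum_(0 <= k < 2 ^ h) up (gray h.-1) k = 1.
Proof.
move=> h0; have X0 : 0 < 2 ^ h.-1 by rewrite expn_gt0.
have E : 2 ^ h = 2 * 2 ^ h.-1 by rewrite -expnS prednK.
have [X1 hX1] : exists X1, 2 ^ h.-1 = X1.+1 by exists (2 ^ h.-1).-1; rewrite prednK.
rewrite (@eq_big_nat _ _ _ 0 (2 ^ h) _ (fun k => k == X1 : nat)); last first.
  by move=> k /andP [_ hk]; rewrite gray_up_small hX1 ?eqSS //; lia.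
by rewrite sum_indicator //; lia.
Qed.

Lemma sum_pow2 m : \sum_(0 <= j < m) 2 ^ (m - j.+1) + 1 = 2 ^ m.
Proof.
elim: m => [|m IH]; first by rewrite big_geq.
rewrite big_nat_recl // subn1 /=.
under eq_big_nat do rewrite subSS.
by rewrite -addnA IH expnS; lia.
Qed.

Lemma gray_ups_total h : 0 < h ->
  \sum_(0 <= j < h) \sum_(0 <= k < 2 ^ h) up (gray j) k = 2 ^ h.-1.
Proof.
case: h => [//|h _] /=; rewrite big_nat_recr // gray_ups_top //.
rewrite (@eq_big_nat _ _ _ 0 h _ (fun j => 2 ^ (h - j.+1))); first exact: sum_pow2.
by move=> j /andP [_ hj]; rewrite gray_ups_low ?subSS //; lia.
Qed.

Lemma gray_last h j : j < h -> gray j (2 ^ h).-1 = (j == h.-1).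
Proof.
move=> hj; have X0 : 0 < 2 ^ j by rewrite expn_gt0.
case: (ltnP j.+1 h) => hj1.
- have [a ha] : exists a, 2 ^ (h - j.+2) = a.+1.
    by exists (2 ^ (h - j.+2)).-1; rewrite prednK // expn_gt0.
  rewrite (expn_split hj1) ha (_ : _.-1 = (4 * 2 ^ j).-1 + a * (4 * 2 ^ j)); last lia.
  by rewrite gray_period gray_small; lia.
- have hjh : h = j.+1 by lia.
  by rewrite hjh expnS gray_small /=; lia.
Qed.

Lemma gray_up_last h j : j < h -> up (gray j) (2 ^ h).-1 = false.
Proof.
move=> hj; rewrite /up gray_last // prednK ?expn_gt0 //.
case: (ltnP j.+1 h) => hj1; last by rewrite (_ : j = h.-1) ?eqxx //; lia.
by rewrite (expn_split hj1) -[_ * _]add0n gray_period gray0 andbF.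
Qed.

Section Construction.
Variables c h : nat.
Hypotheses (h_pos : 0 < h) (c_large : 2 * (h + 1) < c).

Local Notation P := (2 ^ h).

Lemma P_pos : 0 < P. Proof. by rewrite expn_gt0. Qed.
Lemma P_ge2 : 2 <= P. Proof. by rewrite -[2]expn1 leq_pexp2l. Qed.

Definition period := c * P.

Lemma block_offset_lt e k : e < c -> k < P -> e * P + k < period.
Proof. move=> he hk; have : e.+1 * P <= period by rewrite leq_mul2r he orbT. lia. Qed.

Lemma P_le_period : P <= period.
Proof. by rewrite /period -{1}[P]mul1n leq_mul2r; apply/orP; right; lia. Qed.

Definition block (m k : nat) : bool :=
  if m == 0 then false else if m < c - h then true else ~~ gray (m - (c - h)) k.

Lemma block_ones m k : 0 < m -> m < c - h -> block m k = true.
Proof. by move=> hm hmc; rewrite /block ifF ?hmc //; lia. Qed.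

Lemma block_gray m k : c - h <= m -> block m k = ~~ gray (m - (c - h)) k.
Proof. by move=> hm; rewrite /block ifF ?ifF //; lia. Qed.

Lemma block_start m : 0 < m -> block m 0 = true.
Proof. by move=> hm; rewrite /block ifF; [case: ifP; rewrite // gray0 | lia]. Qed.

Definition rho (t : nat) : bool :=
  odd (t %/ period) (+) block ((t %% period) %/ P) ((t %% period) %% P).

Lemma rho_block q e k : e < c -> k < P ->
  rho (q * period + (e * P + k)) = odd q (+) block e k.
Proof.
move=> he hk; rewrite /rho; have [-> ->] := divmodnMDl q (block_offset_lt he hk).
by have [-> ->] := divmodnMDl e hk.
Qed.

Lemma rho_antiper t : rho (t + period) = ~~ rho t.
Proof.
have C0 : 0 < period by have := P_le_period; have := P_pos; lia.
by rewrite /rho divnDr ?dvdnn // divnn C0 modnDr addn1 /= addNb.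
Qed.

Lemma rho_first e k : e < c -> k < P -> rho (e * P + k) = block e k.
Proof. by move=> he hk; have := rho_block 0 he hk; rewrite mul0n add0n. Qed.

Lemma down_rho_block m r : m < c -> r < P ->
  down rho (m * P + r) = if m < c - h then false else up (gray (m - (c - h))) r.
Proof.
move=> hm hr; have P0 := P_pos.
have next : rho (m * P + r).+1 = if r.+1 < P then block m r.+1 else true.
  case: ltnP => hr1; first by rewrite -addnS rho_first.
  have -> : (m * P + r).+1 = m.+1 * P + 0 by rewrite mulSn; lia.
  case: (ltnP m.+1 c) => hm1; first by rewrite rho_first // block_start.
  have -> : m.+1 * P + 0 = 1 * period + (0 * P + 0) by rewrite /period (_ : m.+1 = c); lia.
  by rewrite rho_block //; lia.
rewrite /down next rho_first //; case: (ltnP m (c - h)) => hmc.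
  case: (posnP m) => [-> //|m0].
  by rewrite block_ones //; case: ifP => _ //; rewrite block_ones.
rewrite block_gray //; case: ifP => hr1; first by rewrite block_gray // negbK.
by rewrite andbF (_ : r = P.-1) ?gray_up_last //; lia.
Qed.

Lemma rho_downs_period : \sum_(0 <= t < period) down rho t = 2 ^ h.-1.
Proof.
have P0 := P_pos.
rewrite big_nat_mul (@eq_big_nat _ _ _ 0 c _
  (fun m => if m < c - h then 0 else \sum_(0 <= r < P) up (gray (m - (c - h))) r)); last first.
  move=> m /andP [_ hm]; rewrite -{1}[m * P]add0n big_addn mulSn addnK.
  under eq_big_nat => r /andP [_ hr] do rewrite addnC down_rho_block //.
  by case: ifP => _ //; rewrite sum_nat_zero.
rewrite (big_cat_nat (leq0n (c - h)) (leq_subr h c)) sum_nat_zero => [|m /andP [_ ->] //].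
rewrite /= add0n -{1}[c - h]add0n big_addn (_ : c - (c - h) = h); last lia.
rewrite (@eq_big_nat _ _ _ 0 h _ (fun j => \sum_(0 <= r < P) up (gray j) r)).
  exact: gray_ups_total.
by move=> j _; rewrite ifF ?addnK //; lia.
Qed.

Lemma rho_downs_window t : \sum_(t <= v < t + period) down rho v = 2 ^ h.-1 + rho t.
Proof.
have rho0 : rho 0 = false by rewrite /rho mod0n !div0n mod0n.
by move: (window_down rho_antiper t); rewrite rho_downs_period rho0 /= addn0.
Qed.

Definition ell := period + 1.

Lemma ell_pos : 0 < ell. Proof. by rewrite /ell addn1. Qed.

Definition stretch (u : nat) : nat := if P <= u then u - 1 else u.

Lemma stretch_split u : u < ell -> stretch u %/ P < c /\ stretch u %% P < P.
Proof.
move=> hu; have P0 := P_pos; split; last by rewrite ltn_pmod.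
have := P_le_period; rewrite ltn_divLR // -/period; move: hu; rewrite /stretch /ell; case: ifP; lia.
Qed.

(* Row x reads rho, shifted by x blocks and stretched to antiperiod ell;
   rowbit x e k is the value it reads at offset k of stretched block e. *)
Definition time (x i : nat) : nat :=
  (i %/ ell) * period + stretch (i %% ell) + 2 * period - x * P.

Definition rowbit (x e k : nat) : bool :=
  if x <= e then block (e - x) k else ~~ block (e + c - x) k.

Lemma rowbit_le x e k : x <= e -> rowbit x e k = block (e - x) k.
Proof. by move=> hxe; rewrite /rowbit hxe. Qed.

Lemma rowbit_gt x e k : e < x -> rowbit x e k = ~~ block (e + c - x) k.
Proof. by move=> hxe; rewrite /rowbit leqNgt hxe. Qed.

Lemma rho_shift q e k x : e < c -> k < P -> x < c ->
  rho (q * period + (e * P + k) + 2 * period - x * P) = odd q (+) rowbit x e k.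
Proof.
move=> he hk hx; have xP : x * P <= period by rewrite leq_mul2r; apply/orP; right; lia.
rewrite /rowbit; case: (leqP x e) => hxe.
  have eP : x * P <= e * P by rewrite leq_mul2r hxe orbT.
  rewrite (_ : _ - x * P = q.+2 * period + ((e - x) * P + k)); last by rewrite mulnBl !mulSn; lia.
  by rewrite rho_block //= ?negbK //; lia.
rewrite (_ : _ - x * P = q.+1 * period + ((e + c - x) * P + k)).
  by rewrite rho_block //= ?addNb //; lia.
by rewrite mulnBl mulnDl !mulSn; move: xP; rewrite /period; lia.
Qed.

(* Row h+1 carries an extra sign change at the repeated sample, so that the
   two copies of it can be told apart. *)
Definition spike (x u : nat) : bool := (x == h.+1) && (u == P).

Definition row (x i : nat) : bool := rho (time x i) (+) spike x (i %% ell).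

Definition code (x u : nat) : bool :=
  rowbit x (stretch u %/ P) (stretch u %% P) (+) spike x u.

Lemma row_code x q u : x < c -> u < ell -> row x (q * ell + u) = odd q (+) code x u.
Proof.
move=> hx hu; have [he hk] := stretch_split hu.
rewrite /row /time; have [-> ->] := divmodnMDl q hu.
by rewrite {1}(divn_eq (stretch u) P) rho_shift // /code addbA.
Qed.

Lemma row_antiper x i : x < c -> row x (i + ell) = ~~ row x i.
Proof.
move=> hx; have hu : i %% ell < ell by rewrite ltn_pmod ?ell_pos.
rewrite {1 2}(divn_eq i ell) (_ : _ + ell = (i %/ ell).+1 * ell + i %% ell).
  by rewrite !row_code //= addNb.
by rewrite mulSn; lia.
Qed.

Lemma time_step x i : x < c -> time x i.+1 = time x i \/ time x i.+1 = (time x i).+1.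
Proof.
move=> hx; have P0 := P_pos; have hC := P_le_period.
have xP : x * P <= period by rewrite leq_mul2r; apply/orP; right; lia.
have [q [u [hu ->]]] : exists q u, u < ell /\ i = q * ell + u.
  by exists (i %/ ell), (i %% ell); rewrite ltn_pmod ?ell_pos // -divn_eq.
rewrite /time; have [-> ->] := divmodnMDl q hu; case: (ltnP u.+1 ell) => hu1.
  by rewrite -addnS; have [-> ->] := divmodnMDl q hu1; rewrite /stretch; case: ifP; case: ifP; lia.
rewrite (_ : (q * ell + u).+1 = q.+1 * ell + 0); last by rewrite mulSn; lia.
have [-> ->] := divmodnMDl q.+1 ell_pos.
have su : stretch u = period - 1 by rewrite /stretch ifT; move: hu hu1; rewrite /ell; lia.
have s0 : stretch 0 = 0 by rewrite /stretch ifF //; lia.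
by right; rewrite su s0 mulSn; lia.
Qed.

Lemma time_ell x : x < c -> time x ell = time x 0 + period.
Proof.
move=> hx; have P0 := P_pos; have xP : x * P <= period.
  by rewrite leq_mul2r; apply/orP; right; lia.
rewrite /time divnn ell_pos modnn div0n mod0n /stretch ifF; lia.
Qed.

Lemma row0 x : x < c -> row x 0 = false.
Proof.
move=> hx; have P0 := P_pos.
rewrite -[0](addn0 (0 * ell)) row_code ?ell_pos // /code /stretch ifF; last lia.
rewrite div0n mod0n /spike /rowbit (_ : (0 == P) = false) ?andbF; last lia.
case: leqP => hx0; first by rewrite sub0n.
by rewrite block_start //; lia.
Qed.

Lemma rho_time x u : x < c -> u < ell ->
  rho (time x u) = rowbit x (stretch u %/ P) (stretch u %% P).
Proof.
move=> hx hu; have [he hk] := stretch_split hu.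
rewrite /time (divn_small hu) (modn_small hu).
by have := rho_shift 0 he hk hx; rewrite mul0n add0n -divn_eq.
Qed.

(* Besides its down edges, row x has one 1 per period at a place where its
   sequence is constant, except the spiked row h+1. *)
Definition extra_pos (x : nat) : nat := if x < c.-1 then x.+1 * P + 1 else 0.

Definition extra (x p : nat) : bool := (x != h.+1) && (p %% ell == extra_pos x).

Definition entry (x p : nat) : bool := down (row x) p || extra x p.

(* The extra 1 of row x sits inside its period, where the row reads the
   first two entries of a block of ones (or of zeros, for the last row), so
   the row is constant there and the extra 1 never meets a down edge. *)
Lemma extra_pos_lt x : x < c -> (extra_pos x).+1 < ell.
Proof.
move=> hx; have hP := P_ge2; have hC := P_le_period; rewrite /extra_pos /ell.
case: ifP => hx1; last lia.
have : x.+2 * P <= period by rewrite leq_mul2r; apply/orP; right; lia.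
by rewrite !mulSn; lia.
Qed.

Lemma code_extra x : x < c -> x != h.+1 -> code x (extra_pos x) = code x (extra_pos x).+1.
Proof.
move=> hx hxh; have P0 := P_pos; have hP := P_ge2.
rewrite /code /spike (negbTE hxh) !addbF /extra_pos; case: ifP => hx1.
  have s0 : stretch (x.+1 * P + 1) = x.+1 * P + 0.
    by rewrite /stretch ifT ?mulSn; lia.
  have s1 : stretch (x.+1 * P + 1).+1 = x.+1 * P + 1.
    by rewrite /stretch ifT ?mulSn; lia.
  rewrite s0 s1; have [-> ->] := divmodnMDl x.+1 P0; have [-> ->] := divmodnMDl x.+1 hP.
  by rewrite !rowbit_le ?subSnn // !block_ones //; lia.
have s0 : stretch 0 = 0 by rewrite /stretch ifF //; lia.
have s1 : stretch 1 = 1 by rewrite /stretch ifF //; lia.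
rewrite s0 s1 !divn_small ?modn_small //.
by rewrite !rowbit_gt ?block_ones //; lia.
Qed.

Lemma extra_flat x p : x < c -> extra x p -> row x p = row x p.+1.
Proof.
move=> hx /andP [hxh /eqP hp]; have hlt := extra_pos_lt hx.
by rewrite (divn_eq p ell) hp -addnS !row_code ?code_extra //; lia.
Qed.

Lemma entry_nat x p : x < c -> nat_of_bool (entry x p) = down (row x) p + extra x p.
Proof.
move=> hx; rewrite /entry; case hf: (extra x p); last by rewrite orbF addn0.
by rewrite /down (extra_flat hx hf) andbN.
Qed.

Lemma extra_periodic x p : extra x (p + ell) = extra x p.
Proof. by rewrite /extra modnDr. Qed.

Lemma extra_count x : x < c -> \sum_(0 <= p < ell) extra x p = (x != h.+1).
Proof.
move=> hx; case: (eqVneq x h.+1) => [->|hxh].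
  by rewrite sum_nat_zero // => p _; rewrite /extra eqxx.
rewrite (@eq_big_nat _ _ _ 0 ell _ (fun p => p == extra_pos x : nat)).
  by rewrite sum_indicator //; have := extra_pos_lt hx; lia.
by move=> p /andP [_ hp]; rewrite /extra hxh modn_small.
Qed.

Lemma rowbit_spiked k : rowbit h.+1 0 k = false.
Proof. by rewrite rowbit_gt // block_ones //; lia. Qed.

Lemma rowbit_spiked_next : rowbit h.+1 1 0 = false.
Proof.
rewrite rowbit_gt // (_ : 1 + c - h.+1 = c - h); last lia.
by rewrite block_gray // subnn gray0.
Qed.

Lemma row_downs x : x < c -> \sum_(0 <= p < ell) down (row x) p = 2 ^ h.-1 + (x == h.+1).
Proof.
move=> hx; have P0 := P_pos; have hP := P_ge2; have hC := P_le_period.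
have P0F : (0 == P) = false by apply/eqP; lia.
have r0 : rho (time x 0) = false by move: (row0 hx); rewrite /row mod0n /spike P0F andbF addbF.
have plain : \sum_(0 <= p < ell) down (fun p => rho (time x p)) p = 2 ^ h.-1.
  have := @down_reparam rho (time x) 0 ell (fun p => time_step p hx); rewrite add0n => ->.
  by rewrite time_ell // rho_downs_window r0 addn0.
case: (eqVneq x h.+1) => hxh; last first.
  rewrite /= addn0 -plain; apply: eq_big_nat => p _.
  by rewrite /down /row /spike (negbTE hxh) !addbF.
have rowE q : q <= ell -> row x q = rho (time x q) (+) (q == P).
  move=> hq; rewrite /row /spike hxh eqxx /=; case: (ltnP q ell) => hq'.
    by rewrite modn_small.
  have -> : q = ell by lia.
  by rewrite modnn P0F (_ : (ell == P) = false) //; apply/eqP; rewrite /ell; lia.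
rewrite (@eq_big_nat _ _ _ 0 ell _ (fun p => down (fun q => rho (time x q) (+) (q == P)) p : nat)).
  have hPm : P.-1 < P by rewrite ltn_predL.
  have hC2 : 2 * P <= period by rewrite /period leq_mul2r; apply/orP; right; lia.
  rewrite down_flip ?plain //; first by rewrite /ell; lia.
  - rewrite rho_time //; last by rewrite /ell; lia.
    rewrite (_ : stretch P.-1 = P.-1); last by rewrite /stretch ifF //; lia.
    by rewrite divn_small ?modn_small // hxh rowbit_spiked.
  - rewrite rho_time //; last by rewrite /ell; lia.
    rewrite (_ : stretch P = P.-1); last by rewrite /stretch ifT //; lia.
    by rewrite divn_small ?modn_small // hxh rowbit_spiked.
  - rewrite rho_time //; last by rewrite /ell; lia.
    rewrite (_ : stretch P.+1 = 1 * P + 0); last by rewrite /stretch ifT //; lia.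
    by have [-> ->] := divmodnMDl 1 P0; rewrite hxh rowbit_spiked_next.
by move=> p /andP [_ hp]; rewrite /down !rowE //; lia.
Qed.

Lemma row_weight x i : x < c ->
  \sum_(i <= p < i + ell) entry x p = 2 ^ h.-1 + 1 + row x i.
Proof.
move=> hx; rewrite (eq_big_nat _ _ (fun p _ => entry_nat p hx)) big_split /=.
have downs := window_down (fun p => row_antiper p hx) i.
have extras := @window_periodic (fun p => nat_of_bool (extra x p)) ell
  (fun p => congr1 nat_of_bool (extra_periodic x p)) i.
move: downs; rewrite extras extra_count // row_downs // row0 //.
by case: eqP => _ /=; lia.
Qed.

Lemma rowbit_gray e j : e < c -> j < h ->
  exists x b0, x < c /\ forall k, rowbit x e k = b0 (+) gray j k.
Proof.
move=> he hj; case: (leqP (c - h + j) e) => hej.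
  exists (e - (c - h) - j), true; split; first lia.
  move=> k; rewrite rowbit_le; last lia.
  by rewrite block_gray; [rewrite (_ : e - _ - (c - h) = j) //; lia | lia].
exists (e + h - j), false; split; first lia.
move=> k; rewrite rowbit_gt; last lia.
by rewrite block_gray; [rewrite negbK (_ : e + c - _ - (c - h) = j) //; lia | lia].
Qed.

Lemma rowbit_block_sep e e' k k' : e < e' -> e' < c ->
  exists x, x < c /\ rowbit x e k != rowbit x e' k'.
Proof.
move=> hee he'; case: (ltnP (e' - e) (c - h)) => hd.
  exists e; split; first lia.
  rewrite !rowbit_le; [|lia|lia].
  by rewrite subnn [block 0 _]/block block_ones //; lia.
exists e'.-1; split; first lia.
rewrite rowbit_gt; last lia.
rewrite rowbit_le; last lia.
by rewrite !block_ones //; lia.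
Qed.

Lemma rowbit_inj e e' k k' : e < c -> e' < c -> k < P -> k' < P ->
  (forall x, x < c -> rowbit x e k = rowbit x e' k') -> e = e' /\ k = k'.
Proof.
move=> he he' hk hk' H.
have ee : e = e'.
  case: (ltngtP e e') => // hlt.
  - by have [x [hx]] := rowbit_block_sep k k' hlt he'; rewrite H ?eqxx.
  - by have [x [hx]] := rowbit_block_sep k' k hlt he; rewrite H ?eqxx.
split=> //; subst e'; apply: (@gray_inj h) => // j hj.
have [x [b0 [hx Hx]]] := rowbit_gray he hj.
by have := H x hx; rewrite !Hx => /addbI.
Qed.

Lemma rowbit_meet e e' k k' : e < c -> e' < c ->
  exists x, x < c /\ rowbit x e k = rowbit x e' k'.
Proof.
wlog hee : e e' k k' / e <= e'.
  move=> W he he'; case: (leqP e e') => hle; first exact: W.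
  by have [x [hx E]] := W e' e k' k (ltnW hle) he' he; exists x; split=> //; rewrite E.
move=> he he'; case: (eqVneq e e') => [<-|hne]; first by exists e; split => //; rewrite /rowbit leqnn subnn.
case: (leqP (e + h + 1) e') => ha.
  exists e'; split=> //; rewrite rowbit_gt; last lia.
  by rewrite rowbit_le // subnn [block 0 _]/block block_ones //; lia.
case: (leqP (e' + h + 2) c) => hb.
  exists c.-1; split; first lia.
  rewrite !rowbit_gt; [|lia|lia].
  rewrite (_ : e + c - c.-1 = e.+1); last lia.
  rewrite (_ : e' + c - c.-1 = e'.+1); last lia.
  by rewrite !block_ones //; lia.
exists e.-1; split; first lia.
rewrite !rowbit_le; [|lia|lia].
by rewrite (_ : e - e.-1 = 1); [rewrite !block_ones //; lia | lia].
Qed.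

Lemma code_repeated x : x < c -> code x P = (x == 1) (+) (x == h.+1).
Proof.
move=> hx; have P0 := P_pos.
rewrite /code /spike eqxx andbT /stretch leqnn subn1 divn_small ?ltn_predL //.
rewrite modn_small ?ltn_predL //; congr (_ (+) _).
case: (posnP x) => [->|x0]; first by rewrite /rowbit leqnn.
rewrite rowbit_gt // add0n; case: (ltnP h x) => hxh.
  rewrite (_ : (x == 1) = false); last by apply/eqP; lia.
  by rewrite block_ones //; lia.
rewrite block_gray ?negbK ?gray_last; [|lia|lia].
by apply/idP/idP => /eqP ?; apply/eqP; lia.
Qed.

Lemma repeated_sep e k : e < c ->
  exists x, x < c /\ (x == 1) (+) (x == h.+1) != rowbit x e k.
Proof.
move=> he; have h1F : (h.+1 == 1) = false by apply/eqP; lia.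
case: (eqVneq e 0) => [->|e0].
  by exists h.+1; rewrite rowbit_spiked h1F eqxx; split=> //; lia.
case: (eqVneq e 1) => [->|e1].
  exists 1; rewrite /rowbit leqnn subnn eqxx (_ : (1 == h.+1) = false).
    by split=> //; lia.
  by apply/eqP; lia.
case: (eqVneq e h.+1) => [->|eh].
  by exists h.+1; rewrite /rowbit leqnn subnn h1F eqxx; split=> //; lia.
case: (ltnP e (c - h)) => hec.
  by exists 0; rewrite rowbit_le // subn0 block_ones; [split=> //; lia | lia | lia].
exists e.-1; rewrite rowbit_le; last lia.
rewrite (_ : e - e.-1 = 1); last lia.
rewrite block_ones; [|lia|lia].
rewrite (_ : (e.-1 == 1) = false); last by apply/eqP; lia.
by rewrite (_ : (e.-1 == h.+1) = false); [split=> //; lia | apply/eqP; lia].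
Qed.

Lemma repeated_meet e k : e < c ->
  exists x, x < c /\ (x == 1) (+) (x == h.+1) = rowbit x e k.
Proof.
move=> he; case: (eqVneq e 1) => [->|e1].
  exists h.+2; split; first lia.
  rewrite rowbit_gt // (_ : 1 + c - h.+2 = c - h - 1); last lia.
  rewrite block_ones; [|lia|lia].
  rewrite (_ : (h.+2 == 1) = false); last by apply/eqP; lia.
  by rewrite (_ : (h.+2 == h.+1) = false) //; apply/eqP; lia.
case: (eqVneq e h.+1) => [->|eh].
  exists c.-1; split; first lia.
  rewrite rowbit_gt; last lia.
  rewrite (_ : h.+1 + c - c.-1 = h.+2); last lia.
  rewrite block_ones; [|lia|lia].
  rewrite (_ : (c.-1 == 1) = false); last by apply/eqP; lia.
  by rewrite (_ : (c.-1 == h.+1) = false) //; apply/eqP; lia.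
by exists e; rewrite /rowbit leqnn subnn (negbTE e1) (negbTE eh).
Qed.

Lemma stretch_inj u u' : u != P -> u' != P -> stretch u = stretch u' -> u = u'.
Proof. by rewrite /stretch => hu hu'; case: ifP; case: ifP; lia. Qed.

Lemma code_regular x u : u != P -> code x u = rowbit x (stretch u %/ P) (stretch u %% P).
Proof. by move=> hu; rewrite /code /spike (negbTE hu) andbF addbF. Qed.

(* Any two code words agree in some row; hence no code word is the
   complement of another. *)
Lemma code_meet u u' : u < ell -> u' < ell -> exists x, x < c /\ code x u = code x u'.
Proof.
move=> hu hu'; have [he hk] := stretch_split hu; have [he' hk'] := stretch_split hu'.
case: (eqVneq u P) => [->|hP]; case: (eqVneq u' P) => [->|hP'].
- by exists 0; split=> //; lia.
- have [x [hx E]] := repeated_meet (stretch u' %% P) he'.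
  by exists x; split=> //; rewrite code_repeated // code_regular.
- have [x [hx E]] := repeated_meet (stretch u %% P) he.
  by exists x; split=> //; rewrite code_repeated // code_regular.
- have [x [hx E]] := rowbit_meet (stretch u %% P) (stretch u' %% P) he he'.
  by exists x; split=> //; rewrite !code_regular.
Qed.

Lemma code_inj u u' : u < ell -> u' < ell ->
  (forall x, x < c -> code x u = code x u') -> u = u'.
Proof.
move=> hu hu' H; have [he hk] := stretch_split hu; have [he' hk'] := stretch_split hu'.
case: (eqVneq u P) => [hP|hP]; case: (eqVneq u' P) => [hP'|hP']; try by rewrite hP hP'.
- have [x [hx]] := repeated_sep (stretch u' %% P) he'.
  by rewrite -code_repeated // -code_regular // -hP H // eqxx.
- have [x [hx]] := repeated_sep (stretch u %% P) he.
  by rewrite -code_repeated // -code_regular // -hP' H // eqxx.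
have [E1 E2] : stretch u %/ P = stretch u' %/ P /\ stretch u %% P = stretch u' %% P.
  by apply: rowbit_inj => // x hx; rewrite -!code_regular // H.
by apply: stretch_inj => //; rewrite (divn_eq (stretch u) P) E1 E2 -divn_eq.
Qed.

Lemma row_inj i j : i < j + 2 * ell -> j < i + 2 * ell ->
  (forall x, x < c -> row x i = row x j) -> i = j.
Proof.
move=> h1 h2 H; have hui : i %% ell < ell by rewrite ltn_pmod ?ell_pos.
have huj : j %% ell < ell by rewrite ltn_pmod ?ell_pos.
have Hcode x : x < c -> odd (i %/ ell) (+) code x (i %% ell) = odd (j %/ ell) (+) code x (j %% ell).
  by move=> hx; rewrite -!row_code // -!divn_eq H.
case: (eqVneq (odd (i %/ ell)) (odd (j %/ ell))) => hodd; last first.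
  have [x [hx E]] := code_meet hui huj.
  by move: (Hcode x hx); rewrite E => /addIb E'; rewrite E' eqxx in hodd.
have hu : i %% ell = j %% ell.
  by apply: code_inj => // x hx; move: (Hcode x hx); rewrite hodd => /addbI.
move: h1 h2; rewrite (divn_eq i ell) (divn_eq j ell) hu => h1 h2.
by rewrite (close_same_parity hodd h1 h2).
Qed.
End Construction.

Lemma sqgt_step eta T : T.+1 \in eta -> sqgt eta T < sqgt eta T.+1.
Proof.
rewrite /sqgt; elim: eta => [//|a s IH]; rewrite in_cons /= => /orP [/eqP <-|hs].
  by rewrite ltnn leqnn add1n ltnS; apply: sub_count => e /= /leqW.
have := IH hs; case: (leqP a T) => ha; first by rewrite (leqW ha) ltn_add2l.
by rewrite add0n => H; apply: (leq_trans H); rewrite leq_addl.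
Qed.

Lemma sqgt_bit eta T (b b' : bool) : T.+1 \in eta ->
  sqgt eta (T + b) = sqgt eta (T + b') -> b = b'.
Proof.
move=> hT; have := sqgt_step hT.
by case: b; case: b' => //=; rewrite addn0 addn1 => lt E; rewrite E ltnn in lt.
Qed.

Lemma mxvec_burst c n (F : nat -> nat -> bool) L i (x : 'I_c) : i + L <= n ->
  mxvec_nat (\matrix_(x < c, k < n) F x k)%R (burst n L i) x = \sum_(i <= k < i + L) F x k.
Proof.
move=> hn; rewrite /mxvec_nat /burst.
rewrite (eq_bigr (fun k : 'I_n => F x k * ((i <= k) && (k < i + L)))); last first.
  by move=> k _; rewrite mxE.
rewrite -(big_mkord xpredT (fun k => F x k * ((i <= k) && (k < i + L)))).
rewrite (big_cat_nat (leq0n i) (leq_trans (leq_addr L i) hn)) (big_cat_nat (leq_addr L i) hn) /=.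
rewrite sum_nat_zero => [|k /andP [_ hk]]; last by rewrite leqNgt hk muln0.
rewrite add0n [X in _ + X]sum_nat_zero => [|k /andP [hk _]]; last by rewrite ltnNge hk andbF muln0.
by rewrite addn0; apply: eq_big_nat => k /andP [-> ->]; rewrite muln1.
Qed.

(* Row x of R marks the entries of row x of the construction; by row_weight
   the outcome of a burst at i in row x determines row x i (sqgt_bit), and
   these bits separate i from j (row_inj).  For h = 0 there is no eta_s. *)
Theorem mainTheorem7 (c h n : nat) :
  2 * (h + 1) < c ->
  c * 2 ^ h + 1 <= n ->
  exists R : 'M[bool]_(c, n),
    forall (eta : seq nat) (eta_s : nat),
      2 * eta_s = 2 ^ h + 4 ->          (* eta_s = 2^(h-1) + 2 *)
      thresholds eta eta_s ->
      forall i j : nat,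
        i <= n - (c * 2 ^ h + 1) ->
        j <= n - (c * 2 ^ h + 1) ->
        i != j ->
        i < j + 2 * (c * 2 ^ h + 1) ->
        j < i + 2 * (c * 2 ^ h + 1) ->
        sqgt_vec eta (mxvec_nat R (burst n (c * 2 ^ h + 1) i))
        <> sqgt_vec eta (mxvec_nat R (burst n (c * 2 ^ h + 1) j)).
Proof.
move=> hc hn; case: (posnP h) => [h0|h0].
  by exists 0%R => eta eta_s; rewrite h0 expn0; lia.
exists (\matrix_(x < c, k < n) entry c h x k)%R.
move=> eta eta_s heta [eta_ne _ _ eta_last] i j hi hj /eqP hij h1 h2 E; apply: hij.
have eta_s_in : (2 ^ h.-1 + 1).+1 \in eta.
  rewrite (_ : _.+1 = eta_s); last first.
    have e2 : 2 ^ h = 2 * 2 ^ h.-1 by rewrite -expnS prednK.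
    lia.
  by rewrite -eta_last; move: eta_ne; case: (eta) => // a s _; apply: mem_last.
apply: (row_inj h0 hc h1 h2) => x hx.
move: (congr1 (fun f : {ffun 'I_c -> nat} => f (Ordinal hx)) E); rewrite !ffunE.
by rewrite !mxvec_burst ?row_weight //; [apply: sqgt_bit eta_s_in | lia | lia].
Qed.
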